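(* Let $X$ be a set of reals. Then $B(X)$ satisfies $S_{fin}(\mathcal{D},\mathcal{D})$ if and only if $X$ satisfies $S_{fin}(B_\Omega, B_\Omega)$.
   Context: $B(X)$ is the set of all real-valued Borel functions on $X$ with the topology of pointwise convergence. $S_{fin}(\mathcal{A},\mathcal{B})$ means: for every sequence $(A_n:n\in\mathbb{N})$ of elements of $\mathcal{A}$ there are finite sets $B_n\subseteq A_n$ with $\bigcup_n B_n\in\mathcal{B}$. For the space $B(X)$, $\mathcal{D}$ is the family of all countable dense subsets of $B(X)$. A cover $\mathcal{U}$ of $X$ is an $\omega$-cover if $X\notin\mathcal{U}$ and every finite subset of $X$ is contained in some member of $\mathcal{U}$; $B_\Omega$ is the family of all countable $\omega$-covers of $X$ consisting of Borel sets. *)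

From HB Require Import structures.
From mathcomp Require Import all_boot all_order all_algebra.
From mathcomp Require Import all_classical all_reals all_analysis.
Unset Printing Implicit Defensive.
Import Order.TTheory GRing.Theory Num.Theory numFieldNormedType.Exports.
Local Open Scope classical_set_scope.

Section Defs.
Context {R : realType}.

Definition pts (X : set R) := {x : R | X x}.

Definition rel_open (X : set R) (A : set (pts X)) : Prop :=
  exists U : set R, open U /\ A = (@proj1_sig R X) @^-1` U.

Definition rel_borel (X : set R) (A : set (pts X)) : Prop :=
  <<s rel_open X >> A.

Definition borel_fun (X : set R) (f : pts X -> R) : Prop :=
  forall U : set R, open U -> rel_borel X (f @^-1` U).

Definition BX (X : set R) : set {ptws pts X -> R} :=
  [set f | borel_fun X (f : pts X -> R)].

(* The family D of countable dense subsets of B(X) (density taken in the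
   subspace B(X) of R^X: D is contained in B(X) and B(X) lies in the
   closure of D). *)
Definition Dfam (X : set R) : set (set {ptws pts X -> R}) :=
  [set D | [/\ D `<=` BX X, countable D & BX X `<=` closure D]].

Definition omega_cover (X : set R) (U : set (set (pts X))) : Prop :=
  [/\ \bigcup_(V in U) V = setT, ~ U setT &
      forall F : set (pts X), finite_set F -> exists2 V, U V & F `<=` V].

Definition BOmega (X : set R) : set (set (set (pts X))) :=
  [set U | [/\ omega_cover X U, countable U & forall V, U V -> rel_borel X V]].

End Defs.

Definition Sfin {T : Type} (A B : set (set T)) : Prop :=
  forall An : nat -> set T, (forall n, A (An n)) ->
  exists Bn : nat -> set T,
    (forall n, finite_set (Bn n) /\ Bn n `<=` An n) /\ B (\bigcup_n Bn n).

From HB Require Import structures.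
From mathcomp Require Import all_boot all_order all_algebra.
From mathcomp Require Import all_classical all_reals all_analysis.
From mathcomp Require Import lra.
Import Order.TTheory GRing.Theory Num.Theory numFieldNormedType.Exports.
Local Open Scope classical_set_scope.
Local Open Scope ring_scope.

(* B(X) carries the topology of pointwise convergence, so f lies in the
   closure of D iff for every finite F and every e > 0 some d in D is
   e-close to f on F.  Step functions with rational data form a countable
   family of Borel functions approximating every function on finite sets.
   Given S_fin(B_Omega, B_Omega), dense sets D_n and a step function g, the
   sets [x | |d x - g x| < e], d in D_n, are countable Borel omega-covers;
   selecting from them gives finite E_n in D_n whose union approximates g
   within e on every finite set.  Splitting N into infinitely many infinite
   pieces treats all pairs (g, e) at once, and the union is then dense.
   Conversely, a Borel omega-cover U yields the countable dense set of
   functions equal to a step function on some V in U and to 1 off V: a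
   member 1-close to 0 on a finite F has its V containing F. *)

Lemma finite_set_ind {T : Type} (P : set T -> Prop) :
  P set0 -> (forall A x, finite_set A -> ~ A x -> P A -> P (x |` A)) ->
  forall A, finite_set A -> P A.
Proof.
move=> P0 PU A /finite_setP[n]; elim: n A => [A|n IH A /eq_cardSP[x Ax Anx]].
  by rewrite II0 card_eq0 => /eqP ->.
rewrite -(setD1K Ax); apply: PU; last exact: IH.
- by apply/finite_setP; exists n.
- by case=> _; apply.
Qed.

Lemma countable_image {T U : Type} (f : T -> U) (A : set T) :
  countable A -> countable (f @` A).
Proof. exact: card_le_trans (card_image_le f A). Qed.

Lemma finite_subset_image {T U : Type} {f : T -> U} {A : set T} {B : set U} :
  finite_set B -> B `<=` f @` A ->
  exists2 E, finite_set E /\ E `<=` A & f @` E = B.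
Proof.
move: B; apply: finite_set_ind => [_|B y _ _ IH].
  by exists set0; [split=> //; exact: finite_set0|exact: image_set0].
rewrite subUset => -[/(_ y erefl)[x Ax <-] /IH[E [fE EA] <-]].
exists (x |` E); last by rewrite image_setU image_set1.
split; last by move=> z [->|/EA].
by rewrite finite_setU; split=> //; exact: finite_set1.
Qed.

Lemma patch_setE {T V : Type} (d f : T -> V) (A : set T) (P : T -> V -> Prop) :
  [set x | P x (patch d A f x)] =
  (A `&` [set x | P x (f x)]) `|` (~` A `&` [set x | P x (d x)]).
Proof.
apply/seteqP; split=> x; rewrite /patch /=.
  by case: ifPn => [/set_mem|]; [left|rewrite notin_setE; right].
by case=> -[Ax Px]; [rewrite mem_set|rewrite memNset].
Qed.

Section rel_borel.
Context {R : realType} (X : set R).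
Implicit Types (A B : set (pts X)) (d f : pts X -> R).

Lemma rel_borel0 : rel_borel X set0.
Proof. exact: sigma_algebra0. Qed.

Lemma rel_borelC A : rel_borel X A -> rel_borel X (~` A).
Proof. by move=> /sigma_algebraCD; rewrite setTD. Qed.

Lemma rel_borelT : rel_borel X setT.
Proof. by have := rel_borelC _ rel_borel0; rewrite setC0. Qed.

Lemma rel_borelU A B : rel_borel X A -> rel_borel X B -> rel_borel X (A `|` B).
Proof.
by move=> bA bB; rewrite -bigcup2E; apply: sigma_algebra_bigcup => -[|[|k]] //=;
  exact: rel_borel0.
Qed.

Lemma rel_borelI A B : rel_borel X A -> rel_borel X B -> rel_borel X (A `&` B).
Proof.
move=> bA bB; rewrite -[A `&` B]setCK setCI.
by apply: rel_borelC; apply: rel_borelU; exact: rel_borelC.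
Qed.

Lemma rel_borel_open (U : set R) : open U -> rel_borel X (sval @^-1` U).
Proof. by move=> oU; apply: sub_sigma_algebra; exists U. Qed.

Lemma rel_borel_patch (P : pts X -> R -> Prop) A d f :
  rel_borel X A -> rel_borel X [set x | P x (f x)] ->
  rel_borel X [set x | P x (d x)] -> rel_borel X [set x | P x (patch d A f x)].
Proof.
move=> bA bf bd; rewrite patch_setE.
by apply: rel_borelU; apply: rel_borelI => //; exact: rel_borelC.
Qed.

Lemma borel_fun_cst (c : R) : borel_fun X (cst c).
Proof.
move=> U _; rewrite preimage_cst.
by case: ifP => _; [exact: rel_borelT|exact: rel_borel0].
Qed.

Lemma borel_fun_patch A d f :
  rel_borel X A -> borel_fun X d -> borel_fun X f -> borel_fun X (patch d A f).
Proof.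
move=> bA bd bf U oU.
by apply: (rel_borel_patch (fun _ y => U y)) => //; [exact: bf|exact: bd].
Qed.

Lemma rel_borel_dist_cst f (c e : R) :
  borel_fun X f -> rel_borel X [set x | `|f x - c| < e].
Proof.
move=> bf; have -> : [set x | `|f x - c| < e] = f @^-1` ball c e.
  by apply/seteqP; split=> x; rewrite /= -ball_normE /= distrC.
exact: bf (ball_open _ _).
Qed.

End rel_borel.

Section pointwise_closure.
Context {U : Type}.

Lemma ptws_cvgP {V : topologicalType} (F : set_system {ptws U -> V})
    (f : {ptws U -> V}) :
  Filter F -> F --> f <-> forall t, (fun g => g t) @ F --> f t.
Proof.
move=> FF; rewrite cvg_sup; split=> [Ff t|Ft t].
  exact: (continuous_cvg _ (@initial_continuous _ _ (fun g => g t) f) (Ff t)).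
move=> A; rewrite (@nbhsE (initial_topology (fun g : {ptws U -> V} => g t))).
move=> -[W [[B oB <-] Bft] WA].
by apply: filterS WA _; apply: Ft; exact: open_nbhs_nbhs.
Qed.

Context {R : realType}.

Definition close_on (F : set U) (e : R) (f g : U -> R) :=
  forall x, F x -> `|f x - g x| < e.

Lemma ptws_cvg_close_on {G : set_system (U -> R)} {FG : Filter G}
    {f : {ptws U -> R}} {F : set U} {e : R} :
  G --> f -> finite_set F -> 0 < e -> \forall g \near G, close_on F e g f.
Proof.
move=> /ptws_cvgP Gf + e0; move: F; apply: finite_set_ind => [|F t _ _ IH].
  by apply: nearW => g x.
have ft : \forall g \near G, `|g t - f t| < e.
  apply: (Gf t [set y | `|y - f t| < e]); apply/nbhs_ballP; exists e => // y.
  by rewrite -ball_normE /= distrC.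
by near=> g => x [->|Fx]; [near: g|apply: (near IH g)].
Unshelve. all: by end_near.
Qed.

Definition finite_approx (e : R) (f : U -> R) : set (set (U -> R)) :=
  [set D | forall F, finite_set F -> exists2 d, D d & close_on F e d f].

Lemma finite_approxS (e : R) (f : U -> R) (D D' : set (U -> R)) :
  D `<=` D' -> finite_approx e f D -> finite_approx e f D'.
Proof. by move=> DD' fD F /fD[d Dd dF]; exists d => //; exact: DD'. Qed.

Lemma ptws_closureP (D : set {ptws U -> R}) (f : {ptws U -> R}) :
  closure D f <-> forall e, 0 < e -> finite_approx e f D.
Proof.
split=> [Df e e0 F fF|DF N fN].
  by have [d [Dd dF]] := Df _ (ptws_cvg_close_on (@cvg_id _ (nbhs f)) fF e0);
    exists d.
pose I := [set p : set U * R | finite_set p.1 /\ 0 < p.2].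
pose G := filter_from I (fun p => [set g : U -> R | close_on p.1 p.2 g f]).
have FG : Filter G.
  apply: filter_from_filter.
    by exists (set0, 1); split; [exact: finite_set0|].
  move=> [F1 e1] [F2 e2] [fF1 e10] [fF2 e20]; exists (F1 `|` F2, Num.min e1 e2).
    by split; [rewrite finite_setU|rewrite lt_min e10 e20].
  move=> g /= ge; split=> x Fx; have /= := ge x; rewrite lt_min.
    by case/(_ (or_introl Fx))/andP.
  by case/(_ (or_intror Fx))/andP.
have Gf : G --> f.
  apply/ptws_cvgP => t B /nbhs_ballP[e e0 eB]; exists ([set t], e).
    by split; [exact: finite_set1|].
  by move=> g /(_ t erefl) gt; apply: eB; rewrite -ball_normE /= distrC.
have [[F e] [fF e0] FN] := Gf N fN.
by have [d Dd dF] := DF e e0 F fF; exists d; split=> //; exact: FN.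
Qed.

End pointwise_closure.

Lemma rat_itv_avoid {R : realType} (B : set R) (x : R) :
  finite_set B -> ~ B x ->
  exists a b : rat,
    ratr a < x < ratr b /\ forall y, B y -> ~~ (ratr a < y < ratr b).
Proof.
move=> fB Bx; have : open (~` B).
  rewrite openC; apply: (accessible_finite_set_closed.1 _ B fB).
  exact/hausdorff_accessible/Rhausdorff.
rewrite openE => /(_ x Bx)/nbhs_ballP[r /= r0 rB].
have [a] : exists a : rat, ratr a \in `]x - r, x[ by apply: rat_in_itvoo; lra.
have [b] : exists b : rat, ratr b \in `]x, x + r[ by apply: rat_in_itvoo; lra.
rewrite !in_itv /= => /andP[xb br] /andP[ra ax].
exists a, b; rewrite ax xb; split=> // y By; apply/negP => /andP[ay yb].
apply: (rB y) => //; rewrite -ball_normE /= ltr_distlC.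
by apply/andP; split; lra.
Qed.

Section rat_step.
Context {R : realType} (X : set R).

Definition rat_step (s : seq (rat * rat * rat)) : pts X -> R :=
  foldr (fun p g => patch g (sval @^-1` `]ratr p.1.1, ratr p.1.2[%classic)
                          (cst (ratr p.2))) (cst 0) s.

Lemma borel_fun_rat_step s : borel_fun X (rat_step s).
Proof.
elim: s => [|[[a b] q] s IH] /=; first exact: borel_fun_cst.
apply: borel_fun_patch => //; last exact: borel_fun_cst.
by apply: rel_borel_open; exact: itv_open.
Qed.

Lemma rel_borel_dist_rat_step (d : pts X -> R) s (e : R) :
  borel_fun X d -> rel_borel X [set x | `|d x - rat_step s x| < e].
Proof.
move=> bd; elim: s => [|[[a b] q] s IH] /=; first exact: rel_borel_dist_cst.
apply: (rel_borel_patch X (fun x y => `|d x - y| < e)) => //.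
  by apply: rel_borel_open; exact: itv_open.
exact: rel_borel_dist_cst.
Qed.

Lemma rat_step_approx (f : pts X -> R) {F : set (pts X)} {e : R} :
  finite_set F -> 0 < e -> exists s, close_on F e (rat_step s) f.
Proof.
move=> + e0; move: F; apply: finite_set_ind => [|F x fF Fx [s sF]].
  by exists [::].
have sval_inj : injective (@sval R X).
  exact: eq_sig_hprop (fun _ => @Prop_irrelevance _).
have [a [b [xab abF]]] : exists a b : rat, ratr a < sval x < ratr b /\
    forall y, (sval @` F) y -> ~~ (ratr a < y < ratr b).
  apply: rat_itv_avoid; first exact: finite_image.
  by move=> [y Fy /sval_inj yx]; subst y.
have [q] : exists q : rat, ratr q \in `]f x - e, f x + e[.
  by apply: rat_in_itvoo; lra.
rewrite in_itv /= -ltr_distlC => qfx.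
exists ((a, b, q) :: s) => y /= [->|Fy]; rewrite /patch.
  by rewrite mem_set /= ?in_itv //= distrC.
by rewrite memNset /= ?in_itv //=; [exact: sF|apply/negP/abF; exists y].
Qed.

End rat_step.

Lemma omega_coverP {R : realType} (X : set R) (U : set (set (pts X))) :
  omega_cover X U <->
  ~ U setT /\ forall F, finite_set F -> exists2 V, U V & F `<=` V.
Proof.
split=> [[]//|[nUT UF]]; split=> //; apply/seteqP; split=> // x _.
by have [V UV xV] := UF _ (finite_set1 x); exists V => //; exact: xV.
Qed.

Lemma Sfin_bigcap {T : Type} {I : countType} (A : set (set T))
    (P : I -> set (set T)) :
  (forall i S S', S `<=` S' -> P i S -> P i S') ->
  (forall i, Sfin A (P i)) -> Sfin A (\bigcap_i P i).
Proof.
move=> Pup SP Dn ADn.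
have /choice[E hE] i : exists En : nat -> set T,
    (forall n, finite_set (En n) /\ En n `<=` Dn (pickle (i, n))) /\
    P i (\bigcup_n En n).
  exact: SP.
exists (fun k => if pickle_inv k is Some (i, n) then E i n else set0); split.
  move=> k; have := @pickle_invK (I * nat)%type k.
  case: (pickle_inv k) => [[i n] /= <-|_]; first exact: (hE i).1.
  by split; [exact: finite_set0|].
move=> i _; apply: Pup (hE i).2 => x [n _ Ex].
by exists (pickle (i, n)) => //; rewrite pickleK_inv.
Qed.

Section selection_principles.
Context {R : realType} (X : set R).

(* A d with [|d - g| < e] everywhere cannot enter an omega-cover, but then
   it approximates g by itself. *)
Lemma Sfin_BOmega_finite_approx s (e : R) :
  Sfin (BOmega X) (BOmega X) -> 0 < e ->
  Sfin (Dfam X) (finite_approx e (rat_step X s)).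
Proof.
move=> SB e0 Dn DDn.
pose V (d : pts X -> R) := [set x | `|d x - rat_step X s x| < e].
have [[j [d [Djd Vd]]]|nT] := pselect (exists j d, Dn j d /\ V d = setT).
  exists (fun k => if k == j then [set d] else set0); split.
    move=> k; case: eqP => [->|_]; last by split=> //; exact: finite_set0.
    by split; [exact: finite_set1|move=> _ ->].
  move=> F _; exists d; first by exists j => //; rewrite eqxx.
  by move=> x _; have : V d x by rewrite Vd.
have DnU j : BOmega X (V @` Dn j).
  have [DB cD Dcl] := DDn j; split.
  - apply/omega_coverP; split; first by case=> d Dd Vd; apply: nT; exists j, d.
    move=> F fF; have gD := Dcl _ (borel_fun_rat_step X s).
    have [d Dd dF] := (ptws_closureP _ _).1 gD e e0 F fF.
    by exists (V d); [exists d|].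
  - exact: countable_image.
  - by move=> _ [d Dd <-]; apply: rel_borel_dist_rat_step; exact: DB.
have [Bn [BnV [/omega_coverP[_ BF] _ _]]] := SB _ DnU.
have /choice[En hEn] j :
    exists En, (finite_set En /\ En `<=` Dn j) /\ V @` En = Bn j.
  have [fB BV] := BnV j.
  by have [E hE VE] := finite_subset_image fB BV; exists E.
exists En; split=> [j|F fF]; first exact: (hEn j).1.
have [W [j _]] := BF F fF; rewrite -(hEn j).2 => -[d Ed <-] FVd.
by exists d; [exists j|move=> x /FVd].
Qed.

Lemma Sfin_BOmega_Dfam : Sfin (BOmega X) (BOmega X) -> Sfin (Dfam X) (Dfam X).
Proof.
move=> SB Dn DDn.
pose P (p : seq (rat * rat * rat) * nat) :=
  finite_approx p.2.+1%:R^-1 (rat_step X p.1).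
have SP : Sfin (Dfam X) (\bigcap_p P p).
  apply: Sfin_bigcap => [p|[s m]]; first exact: finite_approxS.
  exact: Sfin_BOmega_finite_approx.
have [En [EnD EnP]] := SP Dn DDn.
exists En; split=> //; split.
- by move=> d [n _ /(EnD n).2 Dd]; have [+ _ _] := DDn n; apply.
- by apply: bigcup_countable => // n _; exact/finite_set_countable/(EnD n).1.
move=> f _; apply/ptws_closureP => e e0 F fF.
have e20 : 0 < e / 2 by lra.
have [s sf] := rat_step_approx X f fF e20.
have [m _ /(_ m (leqnn m)) /= me] := near_infty_natSinv_lt (PosNum e20).
have [d Ed /= dF] := EnP (s, m) I F fF.
exists d => // x Fx; have := dF x Fx; have := sf x Fx.
have := ler_distD (rat_step X s x) (d x) (f x).
by move: me; move: (m.+1%:R^-1) => c; lra.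
Qed.

Definition step_on (V : set (pts X)) (s : seq (rat * rat * rat)) :
    {ptws pts X -> R} :=
  patch (cst 1) V (rat_step X s).

Lemma step_on_close0 V s F : close_on F 1 (step_on V s) (cst 0) -> F `<=` V.
Proof.
move=> h x Fx; apply: contrapT => Vx; have := h x Fx.
by rewrite /step_on patchC ?inE // subr0 normr1 ltxx.
Qed.

Lemma Dfam_step_on {U} :
  BOmega X U -> Dfam X ((fun p => step_on p.1 p.2) @` (U `*` setT)).
Proof.
case=> /omega_coverP[_ UF] cU bU; split.
- move=> _ [[V s] [UV _] <-]; apply: borel_fun_patch.
  + exact: bU.
  + exact: borel_fun_cst.
  + exact: borel_fun_rat_step.
- by apply: countable_image; apply: countableX => //; exact: countableP.
move=> f _; apply/ptws_closureP => e e0 F fF.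
have [V UV FV] := UF F fF; have [s sf] := rat_step_approx X f fF e0.
exists (step_on V s); first by exists (V, s).
by move=> x Fx; rewrite /step_on patchT ?inE; [exact: sf|exact: FV].
Qed.

Lemma Sfin_Dfam_BOmega : Sfin (Dfam X) (Dfam X) -> Sfin (BOmega X) (BOmega X).
Proof.
move=> SD Un UnB.
pose h p := step_on p.1 p.2.
have [En [EnD [_ _ EnDf]]] := SD _ (fun n => Dfam_step_on (UnB n)).
have /choice[Pn hPn] n :
    exists Pn, (finite_set Pn /\ Pn `<=` Un n `*` setT) /\ h @` Pn = En n.
  have [fE ED] := EnD n.
  by have [P hP hPE] := finite_subset_image fE ED; exists P.
have PnU n p : Pn n p -> Un n p.1 by move=> /(hPn n).1.2[].
exists (fun n => fst @` Pn n); split.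
  move=> n; split; first exact/finite_image/(hPn n).1.1.
  by move=> _ [p /PnU Up <-].
split; [apply/omega_coverP; split|..].
- case=> n _ [p /PnU Up pT].
  by have [/omega_coverP[+ _] _ _] := UnB n; apply; rewrite -pT.
- move=> F fF; have /ptws_closureP := EnDf _ (borel_fun_cst X 0).
  move=> /(_ 1 ltr01 F fF)[d [n _ End] dF].
  move: End dF; rewrite -(hPn n).2 => -[p Pp <-] /step_on_close0 FV.
  by exists p.1 => //; exists n => //; exists p.
- apply: bigcup_countable => // n _.
  exact/finite_set_countable/finite_image/(hPn n).1.1.
- by move=> _ [n _ [p /PnU Up <-]]; have [_ _] := UnB n; apply.
Qed.

End selection_principles.

Theorem theorem3p5 (R : realType) (X : set R) :
  Sfin (Dfam X) (Dfam X) <-> Sfin (BOmega X) (BOmega X).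
Proof. by split; [exact: Sfin_Dfam_BOmega|exact: Sfin_BOmega_Dfam]. Qed.
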